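(* Let $A,B,C,D\in\mathsf{W}_\omega$ be such that $|A|=|B|$ and, for every position $i$, the $i$-th symbol of $A$ is $\le$ the $i$-th symbol of $B$. Then $A\precsim DBC$. Moreover, if either $C\neq\Lambda$ or the last symbols of $A$ and $B$ are different, then $A\prec DBC$.
   Context: Words are finite strings over $\mathbb{N}$; $\mathsf{W}_\omega$ is the set of all words, $\Lambda$ the empty word, juxtaposition denotes concatenation, $|A|$ is length. For $k\in\mathbb{N}$, $\mathsf{S}_k$ is the set of words all of whose symbols are $\ge k$. Given a linear preorder $\precsim$ with $A\sim B$ iff $A\precsim B\wedge B\precsim A$ and $A\prec B$ iff $A\precsim B\wedge\neg B\precsim A$, a finite sequence $(A_1,\dots,A_p)$ is lexicographically not greater than $(B_1,\dots,B_q)$ iff either $p\le q$ and $A_i\sim B_i$ for all $i\le p$, or there is $s<\min(p,q)$ with $A_i\sim B_i$ for $i\le s$ and $A_{s+1}\prec B_{s+1}$. A lexicographically maximal subsequence of a finite sequence is a subsequence that is lexicographically not less than every subsequence. The linear preorder $\precsim$ on $\mathsf{W}_\omega$ is defined by recursion on (largest symbol of $AB$) $-$ (smallest symbol of $AB$): $\Lambda\precsim\Lambda$; if $AB$ is nonempty with minimal symbol $n$, write uniquely $A=A_1n\cdots nA_k$, $B=B_1n\cdots nB_l$ ($k,l\ge1$) with $A_i,B_j\in\mathsf{S}_{n+1}$ (possibly empty); let $C,D$ be lexicographically maximal subsequences of $(A_1,\dots,A_k)$, $(B_1,\dots,B_l)$; then $A\precsim B$ iff $C$ is lexicographically not greater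 than $D$. *)

From mathcomp Require Import all_boot.
Set Implicit Arguments. Unset Strict Implicit. Unset Printing Implicit Defensive.

Definition word := seq nat.

(* smallest / largest symbol of a nonempty word (0 for the empty word) *)
Definition wmin (w : word) : nat := foldr minn (head 0 w) w.
Definition wmax (w : word) : nat := foldr maxn 0 w.

(* [blocks n A] = (A_1, ..., A_k) where A = A_1 n A_2 n ... n A_k *)
Fixpoint blocks (n : nat) (A : word) : seq word :=
  match A with
  | [::] => [:: [::]]
  | x :: s =>
      let r := blocks n s in
      if x == n then [::] :: r
      else match r with
           | [::] => [:: [:: x]]
           | b :: bs => (x :: b) :: bs
           end
  end.

Fixpoint subseqs (T : Type) (s : seq T) : seq (seq T) :=
  match s with
  | [::] => [:: [::]]
  | x :: s' => let r := subseqs s' in map (cons x) r ++ r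
  end.

Section Lex.
Variable T : eqType.
Variable le : T -> T -> bool.   (* a (linear) preorder *)
Variable x0 : T.                 (* default value, never used meaningfully *)

Definition psim (a b : T) : bool := le a b && le b a.
Definition plt (a b : T) : bool := le a b && ~~ le b a.

Definition lexle (As Bs : seq T) : bool :=
  let p := size As in let q := size Bs in
  ((p <= q) && all (fun i => psim (nth x0 As i) (nth x0 Bs i)) (iota 0 p))
  || has (fun s =>
        all (fun i => psim (nth x0 As i) (nth x0 Bs i)) (iota 0 s)
        && plt (nth x0 As s) (nth x0 Bs s))
      (iota 0 (minn p q)).

Definition lexmax (S C : seq T) : bool :=
  (C \in subseqs S) && all (fun E => lexle E C) (subseqs S).
End Lex.

(* The recursive definition of the preorder, with fuel bounding
   (largest symbol - smallest symbol) of AB. *)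
Fixpoint wle (f : nat) (A B : word) : bool :=
  if A ++ B is [::] then true else
  match f with
  | 0 => true (* never reached with sufficient fuel *)
  | f'.+1 =>
      let n := wmin (A ++ B) in
      let As := blocks n A in
      let Bs := blocks n B in
      let le := wle f' in
      has (fun C => lexmax le [::] As C &&
             has (fun D => lexmax le [::] Bs D && lexle le [::] C D)
                 (subseqs Bs))
          (subseqs As)
  end.

Definition precsim (A B : word) : bool :=
  wle (wmax (A ++ B) - wmin (A ++ B)).+1 A B.

Definition prec (A B : word) : bool := precsim A B && ~~ precsim B A.

Example ex1 : precsim [:: 1] [:: 0] = false. Proof. by []. Qed.
Example ex2 : precsim [:: 0] [:: 1] = true. Proof. by []. Qed.
Example ex3 : prec [::] [:: 0]. Proof. by []. Qed.

(* Induction on the range of symbols.  Let n be the least symbol of A, D, B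
   and C.  Comparing two words then amounts to comparing their n-blocks
   lexicographically through greedily chosen maximal subsequences, and this
   comparison is monotone along monotone matchings of block sequences.  Cutting
   A at its occurrences of n, every block of A lies over a factor of B of the
   same length and pointwise larger, and that factor lies inside a single
   n-block of DBC.  By induction the block of A is below that n-block of DBC,
   strictly so when the factor of B is continued by a symbol larger than n; in
   that case the same n-block of DBC may also serve the next block of A, which
   is what the strict matchings [embeds_lt] and [sembeds_lt] record. *)

From mathcomp Require Import all_boot zify.
Set Implicit Arguments. Unset Strict Implicit. Unset Printing Implicit Defensive.

(** * Lexicographic comparison and maximal subsequences *)

Section Lexicographic.
Variables (T : eqType) (le : rel T).
Implicit Types s t : seq T.

Fixpoint lexs s t :=
  match s, t with
  | [::], _ => true
  | _ :: _, [::] => false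
  | a :: s', b :: t' => plt le a b || psim le a b && lexs s' t'
  end.

Lemma lexleE x0 s t : lexle le x0 s t = lexs s t.
Proof.
elim: s t => [|a s IH] [|b t] //=.
rewrite -IH /lexle /= ltnS minnSS /= -[1]/(1 + 0) !iotaDl all_map has_map /=.
rewrite (@eq_has _ _ (fun i => psim le a b &&
    (all (fun j => psim le (nth x0 s j) (nth x0 t j)) (iota 0 i)
     && plt le (nth x0 s i) (nth x0 t i)))); last first.
  by move=> i /=; rewrite -[1]/(1 + 0) iotaDl all_map -andbA.
case: (psim le a b) => /=; last by rewrite (@eq_has _ _ pred0) // has_pred0 !orbF andbF.
by rewrite orbCA.
Qed.
End Lexicographic.

Lemma lexs_eq_in (T : eqType) (le le' : rel T) (U : seq T) s t :
  {subset s <= U} -> {subset t <= U} -> {in U &, le =2 le'} ->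
  lexs le s t = lexs le' s t.
Proof.
move=> + + e; elim: s t => [|a s IH] [|b t] //= sU tU.
have aU : a \in U by apply: sU; rewrite mem_head.
have bU : b \in U by apply: tU; rewrite mem_head.
rewrite /plt /psim !e // IH // => z zs; [apply: sU | apply: tU]; by rewrite inE zs orbT.
Qed.

Lemma mem_subseqs_sub (T : eqType) (s c : seq T) : c \in subseqs s -> {subset c <= s}.
Proof.
elim: s c => [|x s IH] c /=; first by rewrite inE => /eqP ->.
rewrite mem_cat => /orP [/mapP [c' Hc' ->] | Hc] y.
- rewrite inE => /orP [/eqP ->|/(IH _ Hc') ys]; first exact: mem_head.
  by rewrite inE ys orbT.
- by move/(IH _ Hc) => ys; rewrite inE ys orbT.
Qed.

Section RelativePreorder.
Variables (T : eqType) (le : rel T) (P : pred T).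
Hypothesis le_total : forall a b, P a -> P b -> le a b || le b a.
Hypothesis le_trans : forall a b c, P a -> P b -> P c -> le a b -> le b c -> le a c.
Implicit Types s t u : seq T.

Lemma le_refl a : P a -> le a a.
Proof. by move=> pa; have := le_total pa pa; rewrite orbb. Qed.

Lemma lexs_refl s : all P s -> lexs le s s.
Proof. by elim: s => [|a s IH] //= /andP [pa ps]; rewrite /psim le_refl //= IH // orbT. Qed.

Lemma lexs_trans s t u : all P s -> all P t -> all P u ->
  lexs le s t -> lexs le t u -> lexs le s u.
Proof.
elim: s t u => [|a s IH] [|b t] [|c u] //= /andP[pa ps] /andP[pb pt] /andP[pc pu].
rewrite /plt /psim.
case/orP => [/andP [ab nba]|/andP [/andP [ab ba] st]];
case/orP => [/andP [bc ncb]|/andP [/andP [bc cb] tu]];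
rewrite (le_trans pa pb pc ab bc) /=.
- by apply/orP; left; apply/negP => ca; rewrite (le_trans pb pc pa bc ca) in nba.
- by apply/orP; left; apply/negP => ca; rewrite (le_trans pb pc pa bc ca) in nba.
- by apply/orP; left; apply/negP => ca; rewrite (le_trans pc pa pb ca ab) in ncb.
- by rewrite (le_trans pc pb pa cb ba) /= (IH t u).
Qed.

Lemma lexs_total s t : all P s -> all P t -> lexs le s t || lexs le t s.
Proof.
elim: s t => [|a s IH] [|b t] //= /andP[pa ps] /andP[pb pt].
rewrite /plt /psim; have := le_total pa pb.
by case: (le a b); case: (le b a) => //= _; apply: IH.
Qed.

(* Keeping exactly the entries that dominate all later ones yields a
   lexicographically maximal subsequence ([lexmax_suffix_maxima]). *)
Fixpoint suffix_maxima s :=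
  if s is x :: s' then
    if all (le^~ x) s' then x :: suffix_maxima s' else suffix_maxima s'
  else [::].

Lemma suffix_maxima_cons x s : suffix_maxima (x :: s) =
  if all (le^~ x) s then x :: suffix_maxima s else suffix_maxima s.
Proof. by []. Qed.

Lemma suffix_maxima_sub s : {subset suffix_maxima s <= s}.
Proof.
elim: s => [|x s IH] //= y; case: ifP => _; rewrite ?inE.
  by case/orP => [->|/IH ->]; rewrite ?orbT.
by move/IH ->; rewrite orbT.
Qed.

Lemma suffix_maxima_eq0 s : (suffix_maxima s == [::]) = (s == [::]).
Proof.
elim: s => [|x s IH] //=; case: ifP => //.
by case: s IH => [|y s'] //= IH _; rewrite IH.
Qed.

Lemma suffix_maxima_subseqs s : suffix_maxima s \in subseqs s.
Proof.
elim: s => [|x s IH] /=; first by rewrite inE.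
by case: ifP => _; rewrite mem_cat ?(map_f (cons x) IH) // IH orbT.
Qed.

Lemma all_suffix_maxima s : all P s -> all P (suffix_maxima s).
Proof. by move=> /allP h; apply/allP => x /suffix_maxima_sub /h. Qed.

Lemma suffix_maxima_head_mem x0 s : s != [::] -> head x0 (suffix_maxima s) \in s.
Proof.
move=> ne; apply: suffix_maxima_sub; case E: (suffix_maxima s) => [|a l] /=.
  by move/eqP: E; rewrite suffix_maxima_eq0 (negbTE ne).
exact: mem_head.
Qed.

Lemma suffix_maxima_head_ge x0 s : s != [::] -> all P s ->
  all (le^~ (head x0 (suffix_maxima s))) s.
Proof.
elim: s => [|x s IH] //= _ /andP [px ps].
case: ifP => [hall|hnall] /=; first by rewrite le_refl.
case: s IH hnall ps => [|y s'] // IH hnall ps.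
have H := IH isT ps; rewrite H andbT.
set h := head x0 _ in H *.
have hm : h \in y :: s' by apply: suffix_maxima_head_mem.
move/negbT: hnall; rewrite -has_predC => /hasP [z zs /= nz].
have pz := allP ps z zs; have ph := allP ps h hm.
have xz : le x z by have := le_total px pz; rewrite (negbTE nz) orbF.
exact: le_trans px pz ph xz (allP H z zs).
Qed.

Lemma all_le_suffix_maxima_head x0 x s : s != [::] -> P x -> all P s ->
  all (le^~ x) s = le (head x0 (suffix_maxima s)) x.
Proof.
move=> ne px ps; have hm := suffix_maxima_head_mem x0 ne.
have H := suffix_maxima_head_ge x0 ne ps.
apply/idP/idP; first by move/allP; apply.
move=> hx; apply/allP => y ys.
exact: le_trans (allP ps y ys) (allP ps _ hm) px (allP H y ys) hx.
Qed.

Lemma sorted_suffix_maxima s : all P s -> sorted (fun a b => le b a) (suffix_maxima s).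
Proof.
elim: s => [|x s IH] //= /andP [px ps]; case: ifP => hall; last exact: IH.
have := IH ps; case E: (suffix_maxima s) => [|a l] //= ->; rewrite andbT.
by apply: (allP hall); apply: suffix_maxima_sub; rewrite E mem_head.
Qed.

Lemma lexs_behead t : all P t -> sorted (fun a b => le b a) t -> lexs le (behead t) t.
Proof.
elim: t => [|a t IH] //= /andP [pa pt].
case: t IH pt => [|b t] //= IH /andP [pb pt'] /andP [ba st].
rewrite /plt /psim ba /=; case: (le a b) => //=.
by apply: IH; rewrite /= ?pb ?pt'.
Qed.

Lemma lexs_suffix_maxima_cons x s : P x -> all P s ->
  lexs le (suffix_maxima s) (suffix_maxima (x :: s)).
Proof.
move=> px ps; rewrite suffix_maxima_cons; case: ifP => hall.
  have := sorted_suffix_maxima ps; case E: (suffix_maxima s) => [|h l] //= so.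
  have hx : le h x by apply: (allP hall); apply: suffix_maxima_sub; rewrite E mem_head.
  rewrite /plt /psim hx /=; case: (le x h) => //=.
  by apply: lexs_behead => //; rewrite -E; apply: all_suffix_maxima.
by apply: lexs_refl; apply: all_suffix_maxima.
Qed.

Lemma lexs_subseqs_suffix_maxima s E : all P s -> E \in subseqs s ->
  lexs le E (suffix_maxima s).
Proof.
elim: s E => [|x s IH] E /=; first by rewrite inE => _ /eqP ->.
move=> /andP [px ps]; rewrite mem_cat => /orP [/mapP [E' E's ->]|Es].
- case: ifP => hall; first by rewrite /= /plt /psim le_refl //= IH.
  have ne : s != [::] by case: s {IH E's ps} hall.
  have := all_le_suffix_maxima_head x ne px ps; rewrite hall.
  have hm := suffix_maxima_head_mem x ne.
  case Eh: (suffix_maxima s) hm => [|h l] /= hm.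
    by move/eqP: Eh; rewrite suffix_maxima_eq0 (negbTE ne).
  move=> hx; have := le_total px (allP ps h hm).
  by rewrite /plt -hx orbF => ->.
- have pE : all P E by apply/allP => y /(mem_subseqs_sub Es) /(allP ps).
  rewrite -suffix_maxima_cons; apply: (lexs_trans (t := suffix_maxima s)) => //.
  - exact: all_suffix_maxima.
  - by apply: all_suffix_maxima; rewrite /= px.
  - exact: IH.
  - exact: lexs_suffix_maxima_cons.
Qed.

Lemma lexmax_suffix_maxima x0 S : all P S -> lexmax le x0 S (suffix_maxima S).
Proof.
move=> pS; rewrite /lexmax suffix_maxima_subseqs /=; apply/allP => E ES.
by rewrite lexleE; apply: lexs_subseqs_suffix_maxima.
Qed.

Lemma lexmax_lexleE x0 S1 S2 : all P S1 -> all P S2 ->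
  has (fun C => lexmax le x0 S1 C &&
     has (fun D => lexmax le x0 S2 D && lexle le x0 C D) (subseqs S2)) (subseqs S1)
  = lexs le (suffix_maxima S1) (suffix_maxima S2).
Proof.
move=> p1 p2; apply/hasP/idP.
- move=> [C C1 /andP [/andP [_ CA] /hasP [D D2 /andP [_ CD]]]].
  have h1 : lexs le (suffix_maxima S1) C.
    by have := allP CA _ (suffix_maxima_subseqs S1); rewrite lexleE.
  have h2 := lexs_subseqs_suffix_maxima p2 D2.
  rewrite lexleE in CD.
  have pC : all P C by apply/allP => y /(mem_subseqs_sub C1) /(allP p1).
  have pD : all P D by apply/allP => y /(mem_subseqs_sub D2) /(allP p2).
  apply: (lexs_trans (t := C)) => //; try exact: all_suffix_maxima.
  by apply: (lexs_trans (t := D)) => //; exact: all_suffix_maxima.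
- move=> H; exists (suffix_maxima S1); first exact: suffix_maxima_subseqs.
  rewrite lexmax_suffix_maxima //=; apply/hasP; exists (suffix_maxima S2).
    exact: suffix_maxima_subseqs.
  by rewrite lexmax_suffix_maxima //= lexleE.
Qed.
End RelativePreorder.

Section Embeddings.
Variables (T : eqType) (le : rel T).
Hypothesis le_total : total le.
Hypothesis le_trans : transitive le.

Let le_total_in a b : predT a -> predT b -> le a b || le b a.
Proof. by move=> _ _; apply: le_total. Qed.

Let le_trans_in a b c : predT a -> predT b -> predT c -> le a b -> le b c -> le a c.
Proof. by move=> _ _ _; apply: le_trans. Qed.

Local Notation S := (suffix_maxima le).
Local Notation L := (lexs le).

Let L_trans s t u : L s t -> L t u -> L s u.
Proof. by apply: (lexs_trans le_trans_in); apply: all_predT. Qed.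

Let L_cons x s : L (S s) (S (x :: s)).
Proof. by apply: (lexs_suffix_maxima_cons le_total_in) => //; apply: all_predT. Qed.

Lemma suffix_maxima_head s : s != [::] ->
  exists h l, S s = h :: l /\ all (le^~ h) s.
Proof.
case: s => [|y s] // _.
have := suffix_maxima_head_ge le_total_in le_trans_in y (s := y :: s) isT (all_predT _).
case E: (S (y :: s)) => [|h l]; last by move=> H; exists h, l.
by move/eqP: E; rewrite suffix_maxima_eq0.
Qed.

Lemma not_le_suffix_maxima_head x s : s != [::] -> ~~ all (le^~ x) s ->
  exists h l, S s = h :: l /\ ~~ le h x.
Proof.
move=> ne nall; have [h [l [E _]]] := suffix_maxima_head ne; exists h, l; split => //.
have := all_le_suffix_maxima_head le_total_in le_trans_in x (x := x) ne isT (all_predT _).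
by rewrite E => <-.
Qed.

Lemma plt_le_nge a x h : le a x -> ~~ le h x -> plt le a h.
Proof.
move=> ax nhx; have xh : le x h by move: (le_total x h); rewrite (negbTE nhx) orbF.
rewrite /plt (le_trans ax xh) /=; apply/negP => ha.
by rewrite (le_trans ha ax) in nhx.
Qed.

Lemma plt_lt_le a x h : plt le a x -> le x h -> plt le a h.
Proof.
move=> /andP [ax nxa] xh; rewrite /plt (le_trans ax xh) /=; apply/negP => ha.
by rewrite (le_trans xh ha) in nxa.
Qed.

Lemma lexs_cons_plt a h l m : plt le a h -> L (a :: m) (h :: l) /\ ~~ L (h :: l) (a :: m).
Proof.
move=> ah; split; first by rewrite /= ah.
by move: ah => /andP [_ nha]; rewrite /= /plt /psim (negbTE nha).
Qed.

(* [embeds As Xs]: the entries of [As] are matched increasingly to entries of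
   [Xs] dominating them; an entry of [Xs] may be matched several times, but then
   it strictly dominates all its partners but the last.  [sembeds] is the
   strict variant: some entry of [Xs] is still available once all of [As] is
   matched. *)
Inductive embeds : seq T -> seq T -> Prop :=
| embeds_nil Xs : embeds [::] Xs
| embeds_skip As x Xs : embeds As Xs -> embeds As (x :: Xs)
| embeds_le a As x Xs : le a x -> embeds As Xs -> embeds (a :: As) (x :: Xs)
| embeds_lt a As x Xs : plt le a x -> embeds As (x :: Xs) -> embeds (a :: As) (x :: Xs).

Inductive sembeds : seq T -> seq T -> Prop :=
| sembeds_nil x Xs : sembeds [::] (x :: Xs)
| sembeds_skip As x Xs : sembeds As Xs -> sembeds As (x :: Xs)
| sembeds_le a As x Xs : le a x -> sembeds As Xs -> sembeds (a :: As) (x :: Xs)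
| sembeds_lt a As x Xs : plt le a x -> sembeds As (x :: Xs) -> sembeds (a :: As) (x :: Xs).

Lemma embeds_catl Ds As Xs : embeds As Xs -> embeds As (Ds ++ Xs).
Proof. by elim: Ds => [|d Ds IH] //= h; apply/embeds_skip/IH. Qed.

Lemma sembeds_catl Ds As Xs : sembeds As Xs -> sembeds As (Ds ++ Xs).
Proof. by elim: Ds => [|d Ds IH] //= h; apply/sembeds_skip/IH. Qed.

Lemma embeds_lexs As Xs : embeds As Xs -> L (S As) (S Xs).
Proof.
elim => {As Xs} [Xs //|As x Xs _ IH|a As x Xs ax _ IH|a As x Xs ax _ IH].
- exact: L_trans IH (L_cons x Xs).
- rewrite !suffix_maxima_cons; case hX: (all _ Xs); case hA: (all _ As).
  + by rewrite /= /plt /psim ax /=; case: (le x a).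
  + by apply: L_trans IH _; have := L_cons x Xs; rewrite suffix_maxima_cons hX.
  + have ne : Xs != [::] by case: Xs {IH} hX.
    have [h [l [-> nhx]]] := not_le_suffix_maxima_head ne (negbT hX).
    exact/(lexs_cons_plt _ _ (plt_le_nge ax nhx)).1.
  + exact: IH.
- rewrite suffix_maxima_cons; case: ifP => hA //.
  have [h [l [-> /andP [xh _]]]] := suffix_maxima_head (s := x :: Xs) isT.
  exact/(lexs_cons_plt _ _ (plt_lt_le ax xh)).1.
Qed.

Lemma sembeds_lexs As Xs : sembeds As Xs -> ~~ L (S Xs) (S As).
Proof.
elim => {As Xs} [x Xs|As x Xs _ IH|a As x Xs ax _ IH|a As x Xs ax _ IH].
- by have [h [l [-> _]]] := suffix_maxima_head (s := x :: Xs) isT.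
- by apply: contra IH => H; apply: L_trans (L_cons x Xs) H.
- rewrite !suffix_maxima_cons; case hX: (all _ Xs); case hA: (all _ As).
  + by rewrite /= /plt /psim ax /= andbF andbT /=; case: (le x a).
  + apply: contra IH => H; apply: L_trans _ H.
    by have := L_cons x Xs; rewrite suffix_maxima_cons hX.
  + have ne : Xs != [::] by case: Xs {IH} hX.
    have [h [l [-> nhx]]] := not_le_suffix_maxima_head ne (negbT hX).
    exact/(lexs_cons_plt _ _ (plt_le_nge ax nhx)).2.
  + exact: IH.
- rewrite [S (a :: As)]suffix_maxima_cons; case: ifP => hA //.
  have [h [l [-> /andP [xh _]]]] := suffix_maxima_head (s := x :: Xs) isT.
  exact/(lexs_cons_plt _ _ (plt_lt_le ax xh)).2.
Qed.
End Embeddings.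

(** * Blocks of a word *)

Lemma leq_foldr_minn d s x : x \in d :: s -> foldr minn d s <= x.
Proof.
elim: s => [|a s IH] /=; first by rewrite inE => /eqP ->.
rewrite !inE => /orP [xd|/orP [/eqP ->|xs]]; last 2 first.
- by rewrite geq_minl.
- by rewrite geq_min IH ?orbT // inE xs orbT.
- by rewrite geq_min IH ?orbT // inE xd.
Qed.

Lemma foldr_minn_mem d s : foldr minn d s \in d :: s.
Proof.
elim: s => [|a s IH] /=; first by rewrite inE.
rewrite /minn; case: ifP => _; first by rewrite !inE eqxx orbT.
by move: IH; rewrite !inE => /orP [->|->]; rewrite ?orbT.
Qed.

Lemma wmin_le w x : x \in w -> wmin w <= x.
Proof. by case: w => [|a s] //= xin; rewrite /wmin /= geq_min leq_foldr_minn ?orbT. Qed.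

Lemma wmin_mem w : w != [::] -> wmin w \in w.
Proof.
case: w => [|a s] //= _; rewrite /wmin /= /minn; case: ifP => _.
  by rewrite mem_head.
exact: foldr_minn_mem.
Qed.

Lemma all_wmin w : all (fun x => wmin w <= x) w.
Proof. by apply/allP => x; apply: wmin_le. Qed.

Lemma wmax_ge w x : x \in w -> x <= wmax w.
Proof.
by elim: w => [|a s IH] //=; rewrite inE => /orP [/eqP ->|/IH]; rewrite /wmax /=; lia.
Qed.

Lemma wmax_le w m : all (fun x => x <= m) w -> wmax w <= m.
Proof. by elim: w => [|a w IH] //= /andP [am /IH]; rewrite /wmax /= geq_max am. Qed.

Lemma wmin_le_wmax w : w != [::] -> wmin w <= wmax w.
Proof. by move/wmin_mem/wmax_ge. Qed.

Definition within lo hi (w : word) := all (fun x => lo <= x < hi) w.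

Lemma within_cat lo hi u v : within lo hi (u ++ v) = within lo hi u && within lo hi v.
Proof. exact: all_cat. Qed.

Lemma within_cons lo hi x w :
  within lo hi (x :: w) = (lo <= x < hi) && within lo hi w.
Proof. by []. Qed.

Lemma within_ge lo hi w : within lo hi w -> all (fun x => lo <= x) w.
Proof. by apply: sub_all => x /andP []. Qed.

Lemma within_sub lo hi u v : {subset u <= v} -> within lo hi v -> within lo hi u.
Proof. by move=> s /allP h; apply/allP => x /s /h. Qed.

Lemma within_widen lo lo' hi hi' w :
  lo <= lo' -> hi' <= hi -> within lo' hi' w -> within lo hi w.
Proof. by move=> h1 h2; apply: sub_all => x; lia. Qed.

Lemma within_range w : within (wmin w) (wmax w).+1 w.
Proof. by apply/allP => x xw; rewrite wmin_le //= ltnS wmax_ge. Qed.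

Lemma within_wmax w : within 0 (wmax w).+1 w.
Proof. by apply: within_widen (within_range w). Qed.

Lemma within_empty lo hi w : hi <= lo -> within lo hi w -> w = [::].
Proof. by case: w => //= x w h /andP [hx _]; lia. Qed.

Lemma wmin_ge lo hi w : w != [::] -> within lo hi w -> lo <= wmin w.
Proof. by move=> ne /allP h; have /andP [] := h _ (wmin_mem ne). Qed.

Lemma within_notin n hi w : within n hi w -> n \notin w -> within n.+1 hi w.
Proof.
elim: w => [|a w IH] //= /andP [ha hw]; rewrite inE negb_or => /andP [na nw].
by rewrite IH // andbT; move: ha na; rewrite eq_sym => h /eqP; lia.
Qed.

Lemma within_nin n hi w : within n.+1 hi w -> n \notin w.
Proof. by move=> /allP h; apply/negP => /h; rewrite ltnn. Qed.

Lemma within_all2_leq n hi (u v : word) :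
  all2 leq u v -> within n.+1 hi u -> within n hi v -> within n.+1 hi v.
Proof.
elim: u v => [|a u IH] [|b v] //= /andP [ab uv] /andP [ha hu] /andP [hb hv].
by rewrite (IH v) // andbT; move: ab ha hb; lia.
Qed.

Lemma blocks_neq0 n W : blocks n W != [::].
Proof. by elim: W => [|x s IH] //=; case: ifP => // _; case: (blocks n s) IH. Qed.

Lemma head_blocks n W : head [::] (blocks n W) \in blocks n W.
Proof. by case: (blocks n W) (blocks_neq0 n W) => // b bs _; apply: mem_head. Qed.

Lemma blocks_catl n U W : n \notin U ->
  blocks n (U ++ W) = (U ++ head [::] (blocks n W)) :: behead (blocks n W).
Proof.
elim: U => [|x U IH] /=; first by case: (blocks n W) (blocks_neq0 n W).
by rewrite inE negb_or eq_sym => /andP [/negbTE -> /IH ->].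
Qed.

Lemma blocks_cat_sep n U W : n \notin U -> blocks n (U ++ n :: W) = U :: blocks n W.
Proof. by move/(blocks_catl (n :: W)) => ->; rewrite /= eqxx /= cats0. Qed.

Lemma blocks_notin n W : n \notin W -> blocks n W = [:: W].
Proof. by move=> h; have := blocks_catl [::] h; rewrite !cats0. Qed.

Lemma blocks_eq_nil n C : blocks n C = [:: [::]] -> C = [::].
Proof.
case: C => [|x C] //=; case: ifP => _; first by case: (blocks n C) (blocks_neq0 n C).
by case: (blocks n C).
Qed.

Lemma blocks_catr n D W : exists Ds dl,
  blocks n D = rcons Ds dl /\ blocks n (D ++ W) = Ds ++ blocks n (dl ++ W).
Proof.
elim: D => [|x D [Ds [dl [e1 e2]]]]; first by exists [::], [::].
rewrite /= e1 e2; case: ifP => [_|xn]; first by exists ([::] :: Ds), dl.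
case: Ds e1 e2 => [|d Ds] e1 e2 /=; last by exists ((x :: d) :: Ds), dl.
exists [::], (x :: dl); split => //=; rewrite xn.
by case: (blocks n (dl ++ W)) (blocks_neq0 n (dl ++ W)).
Qed.

Lemma blocks_sub n W X : X \in blocks n W -> all (fun x => (x \in W) && (x != n)) X.
Proof.
elim: W X => [|y W IH] X /=; first by rewrite inE => /eqP ->.
have sub Z : all (fun x => (x \in W) && (x != n)) Z ->
    all (fun x => (x \in y :: W) && (x != n)) Z.
  by apply: sub_all => z /andP [zW ->]; rewrite inE zW orbT.
case: ifP => [/eqP yn|yn].
  by rewrite inE => /orP [/eqP -> //| /IH /sub].
case E: (blocks n W) (blocks_neq0 n W) IH => [|b bs] // _ IH.
rewrite inE => /orP [/eqP -> /=|xb].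
  by rewrite mem_head yn /=; apply/sub/IH/mem_head.
by apply/sub/IH; rewrite inE xb orbT.
Qed.

Lemma within_blocks lo hi n W X : within lo hi W -> all (fun x => n <= x) W ->
  X \in blocks n W -> within n.+1 hi X.
Proof.
move=> hw hn /blocks_sub hX; apply/allP => x /(allP hX) /andP [xi /eqP xn].
by have := allP hw x xi; have := allP hn x xi; lia.
Qed.

Lemma within_blocks_cat lo hi n A B X : within lo hi (A ++ B) ->
  all (fun x => n <= x) (A ++ B) -> X \in blocks n A ++ blocks n B -> within n.+1 hi X.
Proof.
rewrite within_cat all_cat mem_cat => /andP [wA wB] /andP [nA nB].
by case/orP; [apply: within_blocks wA nA | apply: within_blocks wB nB].
Qed.

(** * The preorder as a comparison of block sequences *)

Definition wle_step (le : rel word) n A B :=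
  has (fun C => lexmax le [::] (blocks n A) C &&
     has (fun D => lexmax le [::] (blocks n B) D && lexle le [::] C D)
         (subseqs (blocks n B)))
    (subseqs (blocks n A)).

Lemma wle_step_eq_in le1 le2 n A B :
  {in blocks n A ++ blocks n B &, le1 =2 le2} ->
  wle_step le1 n A B = wle_step le2 n A B.
Proof.
move=> e; rewrite /wle_step /lexmax.
set U := blocks n A ++ blocks n B.
have SA : {subset blocks n A <= U} by move=> z zA; rewrite mem_cat zA.
have SB : {subset blocks n B <= U} by move=> z zB; rewrite mem_cat zB orbT.
have lx S c d : {subset S <= U} -> c \in subseqs S -> d \in subseqs S ->
    lexle le1 [::] c d = lexle le2 [::] c d.
  move=> SU cS dS; rewrite !lexleE; apply: (lexs_eq_in (U := U)) => // z.
    by move/(mem_subseqs_sub cS)/SU.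
  by move/(mem_subseqs_sub dS)/SU.
apply: eq_in_has => c cA; rewrite cA /= (eq_in_all (fun d dA => lx _ _ _ SA dA cA)).
congr andb; apply: eq_in_has => d dB; rewrite dB /=.
rewrite (eq_in_all (fun d' dB' => lx _ _ _ SB dB' dB)); congr andb.
rewrite !lexleE; apply: (lexs_eq_in (U := U)) => // z.
  by move/(mem_subseqs_sub cA)/SA.
by move/(mem_subseqs_sub dB)/SB.
Qed.

Lemma wleS f A B : A ++ B != [::] -> wle f.+1 A B = wle_step (wle f) (wmin (A ++ B)) A B.
Proof. by rewrite /=; case: (A ++ B). Qed.

Lemma wle_nil f A B : A ++ B = [::] -> wle f A B.
Proof. by case: f => [|f] /=; case: (A ++ B). Qed.

Lemma wle_fuel k f g lo hi A B : hi - lo <= k -> within lo hi (A ++ B) ->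
  k <= f -> k <= g -> wle f A B = wle g A B.
Proof.
elim: k f g lo A B => [|k IH] f g lo A B hk hw hf hg.
  by rewrite !wle_nil // (within_empty _ hw) //; lia.
have [E|NE] := eqVneq (A ++ B) [::]; first by rewrite !wle_nil.
case: f hf => [|f] hf //; case: g hg => [|g] hg //.
rewrite !wleS //; apply: wle_step_eq_in => X Y HX HY.
have nlo := wmin_ge NE hw.
have wX Z := within_blocks_cat hw (all_wmin (A ++ B)) (X := Z).
by apply: (IH f g (wmin (A ++ B)).+1); rewrite ?within_cat ?wX //; lia.
Qed.

Lemma wle_precsim lo hi f A B : within lo hi (A ++ B) -> hi - lo <= f ->
  wle f A B = precsim A B.
Proof.
move=> hw hf; have [E|NE] := eqVneq (A ++ B) [::]; first by rewrite /precsim !wle_nil.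
have nlo := wmin_ge NE hw.
have mx : wmax (A ++ B) < hi.
  have /andP [_ hi0] := allP hw _ (wmin_mem NE).
  have : wmax (A ++ B) <= hi.-1 by apply: wmax_le; apply: sub_all hw => x /andP [_]; lia.
  lia.
have := wmin_le_wmax NE; rewrite /precsim => mn.
by apply: (wle_fuel (k := (wmax (A ++ B)).+1 - wmin (A ++ B)) _ (within_range _)); lia.
Qed.

Lemma precsim_unfold A B : A ++ B != [::] ->
  precsim A B = wle_step precsim (wmin (A ++ B)) A B.
Proof.
move=> NE; rewrite {1}/precsim wleS //; apply: wle_step_eq_in => X Y HX HY.
have hw := within_blocks_cat (within_range (A ++ B)) (all_wmin _).
apply: (wle_precsim (lo := (wmin (A ++ B)).+1) (hi := (wmax (A ++ B)).+1)).
  by rewrite within_cat !hw.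
by rewrite subSS.
Qed.

Section PrecsimBlocks.
Variable P : pred word.
Hypothesis precsim_total_in : forall A B, P A -> P B -> precsim A B || precsim B A.
Hypothesis precsim_trans_in : forall A B C, P A -> P B -> P C ->
  precsim A B -> precsim B C -> precsim A C.

(* [n] need not occur in [X ++ Y]; then both block sequences are singletons. *)
Lemma precsim_blocks_in n X Y : all (fun x => n <= x) (X ++ Y) ->
  all P (blocks n X) -> all P (blocks n Y) ->
  precsim X Y = lexs precsim (suffix_maxima precsim (blocks n X))
                             (suffix_maxima precsim (blocks n Y)).
Proof.
move=> hn pX pY; have [nin|nout] := boolP (n \in X ++ Y).
  have ne : X ++ Y != [::] by case: (X ++ Y) nin.
  rewrite precsim_unfold //; have -> : wmin (X ++ Y) = n.
    by apply/eqP; rewrite eqn_leq wmin_le //= (allP hn _ (wmin_mem ne)).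
  exact: (lexmax_lexleE precsim_total_in precsim_trans_in).
move: nout; rewrite mem_cat negb_or => /andP [nX nY].
by rewrite !blocks_notin //= /plt /psim; case: (precsim X Y); case: (precsim Y X).
Qed.
End PrecsimBlocks.

Lemma precsim_total_trans_within k lo hi A B C : hi - lo <= k ->
  within lo hi (A ++ B ++ C) ->
  (precsim A B || precsim B A) /\ (precsim A B -> precsim B C -> precsim A C).
Proof.
elim: k lo A B C => [|k IH] lo A B C hk hw;
  have [E|NE] := eqVneq (A ++ B ++ C) [::];
  try by clear hw; case: A E => [|? ?] //; case: B => [|? ?] //; case: C => [|? ?].
  by move: NE; rewrite (within_empty _ hw) //; lia.
set n := wmin (A ++ B ++ C).
have nlo : lo <= n := wmin_ge NE hw.
have hn : all (fun x => n <= x) (A ++ B ++ C) := all_wmin _.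
clearbody n.
have tot a b : within n.+1 hi a -> within n.+1 hi b -> precsim a b || precsim b a.
  move=> pa pb; apply: (proj1 (IH n.+1 a b a _ _)); first lia.
  by rewrite !within_cat pa pb.
have tr a b c : within n.+1 hi a -> within n.+1 hi b -> within n.+1 hi c ->
    precsim a b -> precsim b c -> precsim a c.
  move=> pa pb pc; apply: (proj2 (IH n.+1 a b c _ _)); first lia.
  by rewrite !within_cat pa pb pc.
have blocksP W : {subset W <= A ++ B ++ C} -> all (within n.+1 hi) (blocks n W).
  move=> sW; apply/allP => Z; apply: (within_blocks (within_sub sW hw)).
  by apply/allP => x /sW /(allP hn).
have ordXY X Y : {subset X <= A ++ B ++ C} -> {subset Y <= A ++ B ++ C} ->
    precsim X Y = lexs precsim (suffix_maxima precsim (blocks n X))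
                               (suffix_maxima precsim (blocks n Y)).
  move=> sX sY; apply: (precsim_blocks_in tot tr _ (blocksP X sX) (blocksP Y sY)).
  by rewrite all_cat; apply/andP; split; apply/allP => x; [move/sX | move/sY]; apply: (allP hn).
have allS W : {subset W <= A ++ B ++ C} ->
    all (within n.+1 hi) (suffix_maxima precsim (blocks n W)).
  by move=> sW; apply/all_suffix_maxima/blocksP.
have sA : {subset A <= A ++ B ++ C} by move=> x; rewrite !mem_cat => ->.
have sB : {subset B <= A ++ B ++ C} by move=> x; rewrite !mem_cat => ->; rewrite orbT.
have sC : {subset C <= A ++ B ++ C} by move=> x; rewrite !mem_cat => ->; rewrite !orbT.
split; first by rewrite !ordXY //; apply: (lexs_total tot (allS A sA) (allS B sB)).
by rewrite !ordXY //; apply: (lexs_trans tr (allS A sA) (allS B sB) (allS C sC)).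
Qed.

Lemma precsim_total : total precsim.
Proof.
move=> A B; exact: (proj1 (precsim_total_trans_within (C := A) (leqnn _) (within_wmax _))).
Qed.

Lemma precsim_trans : transitive precsim.
Proof.
move=> B A C; exact: (proj2 (precsim_total_trans_within (leqnn _) (within_wmax (A ++ B ++ C)))).
Qed.

Lemma precsim_blocks n X Y : all (fun x => n <= x) (X ++ Y) ->
  precsim X Y = lexs precsim (suffix_maxima precsim (blocks n X))
                             (suffix_maxima precsim (blocks n Y)).
Proof.
move=> hn; apply: (precsim_blocks_in (P := predT)) => //; try exact: all_predT.
  by move=> A B _ _; apply: precsim_total.
by move=> A B C _ _ _; apply: precsim_trans.
Qed.

Lemma split_first_occurrence (n : nat) A : n \in A ->
  exists A1 A2, A = A1 ++ n :: A2 /\ n \notin A1.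
Proof.
elim: A => [|a A IH] //; rewrite inE; have [-> _|an] := eqVneq n a; first by exists [::], A.
move=> /= /IH [A1 [A2 [-> h]]]; exists (a :: A1), A2; split => //.
by rewrite inE negb_or an.
Qed.

Lemma all2_catl (S T : Type) (r : S -> T -> bool) s1 s2 t : all2 r (s1 ++ s2) t ->
  exists t1 t2, [/\ t = t1 ++ t2, all2 r s1 t1 & all2 r s2 t2].
Proof.
elim: s1 t => [|a s1 IH] t /=; first by exists [::], t.
case: t => [|b t] //= /andP [ab /IH [t1 [t2 [-> h1 h2]]]].
by exists (b :: t1), t2; rewrite /= ab.
Qed.

Lemma all2_size (S T : Type) (r : S -> T -> bool) s t : all2 r s t -> size s = size t.
Proof. by rewrite all2E => /andP [/eqP]. Qed.

Lemma all2_nth (A B : word) : size A = size B ->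
  (forall i, i < size A -> nth 0 A i <= nth 0 B i) -> all2 leq A B.
Proof.
elim: A B => [|a A IH] [|b B] //= [e] h.
by rewrite (h 0 isT) /=; apply: IH => // i hi; apply: (h i.+1).
Qed.

Lemma last_nonnil (T : eqType) (x y : T) (s : seq T) : s != [::] -> last x s = last y s.
Proof. by case: s. Qed.

Lemma all2_last_neq (A B : word) x y : all2 leq A B ->
  last x A != last x B -> last y A != last y B.
Proof.
have [-> | ne] := eqVneq A [::]; first by case: B => [|? ?] //= _; rewrite eqxx.
move=> AB; have neB : B != [::] by rewrite -size_eq0 -(all2_size AB) size_eq0.
by rewrite !(last_nonnil x y).
Qed.

Definition below_factor (A B C D : word) :=
  precsim A (D ++ B ++ C) /\
  ((C != [::] \/ last 0 A != last 0 B) -> prec A (D ++ B ++ C)).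

Section BlockEmbedding.
Variables n hi : nat.
Hypothesis below_factor_above : forall A B C D,
  within n.+1 hi A -> within n.+1 hi B -> within n.+1 hi C -> within n.+1 hi D ->
  all2 leq A B -> below_factor A B C D.

(* [dl] is the part of the ambient word that precedes [B] inside the n-block
   of [dl ++ B ++ C] containing the start of [B]; it contains no [n]. *)
Definition block_embedding A B C dl :=
  embeds precsim (blocks n A) (blocks n (dl ++ B ++ C)) /\
  ((C != [::] \/ last n A != last n B) ->
   sembeds precsim (blocks n A) (blocks n (dl ++ B ++ C))).

Lemma prec_nil_within X : within n.+1 hi X -> X != [::] -> prec [::] X.
Proof.
move=> wX ne.
have [_ lt] := below_factor_above (A := [::]) (B := [::]) (D := [::]) isT isT wX isT isT.
by apply: lt; left.
Qed.

Lemma block_embedding_notin A B C dl : within n.+1 hi A -> within n.+1 hi B ->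
  within n hi C -> within n.+1 hi dl -> all2 leq A B -> block_embedding A B C dl.
Proof.
move=> wA wB wC wdl AB.
rewrite /block_embedding blocks_notin ?(within_nin wA) // catA blocks_catl; last first.
  by apply: (within_nin (hi := hi)); rewrite within_cat wdl wB.
have := within_blocks wC (within_ge wC) (head_blocks n C).
case EC: (blocks n C) (blocks_neq0 n C) => [|c1 cs] //= _ wc1.
have [le1 lt1] := below_factor_above wA wB wc1 wdl AB.
rewrite -catA; split => [|hc]; first exact: embeds_le le1 (embeds_nil _ _).
have [c1n|c1n] := eqVneq c1 [::]; last by apply: sembeds_lt (sembeds_nil _ _ _); apply: lt1; left.
have [Cn|Cn] := eqVneq C [::].
  apply: sembeds_lt (sembeds_nil _ _ _); apply: lt1; right.
  by case: hc => [|/(all2_last_neq 0 AB)]; rewrite ?Cn.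
case: cs EC => [|y ys] EC; last exact: sembeds_le le1 (sembeds_nil _ _ _).
by rewrite c1n in EC; move/blocks_eq_nil: EC => EC; rewrite EC eqxx in Cn.
Qed.

Lemma block_embedding_sep_eq A1 A2 B1 B2 C dl :
  within n.+1 hi A1 -> within n.+1 hi B1 -> within n.+1 hi dl -> all2 leq A1 B1 ->
  block_embedding A2 B2 C [::] ->
  block_embedding (A1 ++ n :: A2) (B1 ++ n :: B2) C dl.
Proof.
move=> wA1 wB1 wdl AB1 [e1 e2].
rewrite /block_embedding blocks_cat_sep ?(within_nin wA1) //.
have -> : dl ++ (B1 ++ n :: B2) ++ C = (dl ++ B1) ++ n :: (B2 ++ C) by rewrite -!catA.
rewrite blocks_cat_sep; last by apply: (within_nin (hi := hi)); rewrite within_cat wdl wB1.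
have [le1 _] := below_factor_above wA1 wB1 (C := [::]) isT wdl AB1.
rewrite cats0 in le1; rewrite !last_cat /=.
by split => [|hc]; [apply: embeds_le le1 e1 | apply: sembeds_le le1 (e2 hc)].
Qed.

Lemma block_embedding_sep_gt A1 A2 B1 b B2 C dl :
  within n.+1 hi A1 -> within n.+1 hi B1 -> within n.+1 hi dl -> n < b < hi ->
  within n hi (B2 ++ C) -> all2 leq A1 B1 -> size A2 = size B2 ->
  block_embedding A2 B2 C (dl ++ B1 ++ [:: b]) ->
  block_embedding (A1 ++ n :: A2) (B1 ++ b :: B2) C dl.
Proof.
move=> wA1 wB1 wdl hb wBC AB1 sz.
set dl' := dl ++ B1 ++ [:: b]; have wdl' : within n.+1 hi dl'.
  by rewrite /dl' !within_cat wdl wB1 /= hb.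
rewrite /block_embedding blocks_cat_sep ?(within_nin wA1) //.
have -> : dl ++ (B1 ++ b :: B2) ++ C = dl' ++ B2 ++ C by rewrite /dl' -!catA.
rewrite blocks_catl; last exact: (within_nin wdl').
have := within_blocks wBC (within_ge wBC) (head_blocks n (B2 ++ C)).
case: (blocks n (B2 ++ C)) (blocks_neq0 n (B2 ++ C)) => [|c' cs] //= _ wc' [e1 e2].
have lt1 : prec A1 (dl' ++ c').
  have wbc : within n.+1 hi (b :: c') by rewrite within_cons hb.
  have [_ lt] := below_factor_above wA1 wB1 wbc wdl AB1.
  by rewrite /dl' -!catA; apply: lt; left.
split => [|hc]; first exact: embeds_lt lt1 e1.
apply: sembeds_lt lt1 _; have [A2n|A2n] := eqVneq A2 [::].
  rewrite A2n; apply: sembeds_lt (sembeds_nil _ _ _); apply: prec_nil_within.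
    by rewrite within_cat wdl' wc'.
  by rewrite -size_eq0 size_cat /dl' !size_cat /= !addnS.
apply: e2; case: hc => [->|hl]; [by left | right].
have B2n : B2 != [::] by rewrite -size_eq0 -sz size_eq0.
by rewrite !last_cat /= (last_nonnil b n) in hl.
Qed.

Lemma block_embedding_within A B C dl : within n hi (A ++ B ++ C) ->
  within n.+1 hi dl -> all2 leq A B -> block_embedding A B C dl.
Proof.
have [m] := ubnP (size A); elim: m A B C dl => // m IH A B C dl szA.
rewrite !within_cat => /and3P [wA wB wC] wdl AB.
have [nA|nA] := boolP (n \in A); last first.
  have wA' := within_notin wA nA.
  exact: block_embedding_notin wA' (within_all2_leq AB wA' wB) wC wdl AB.
have [A1 [A2 [eA nA1]]] := split_first_occurrence nA; subst A.
have [B1 [[|b B2] [eB AB1 //= /andP [nb AB2]]]] := all2_catl AB; subst B.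
move: wA wB; rewrite !within_cat !within_cons => /and3P [wA1 _ wA2] /and3P [wB1 /andP [_ bhi] wB2].
have wA1' := within_notin wA1 nA1; have wB1' := within_all2_leq AB1 wA1' wB1.
have IH2 dl' : within n.+1 hi dl' -> block_embedding A2 B2 C dl'.
  move=> wdl'; apply: IH wdl' AB2; first by move: szA; rewrite size_cat /=; lia.
  by rewrite !within_cat wA2 wB2 wC.
have [->|bn] := eqVneq b n; first exact: block_embedding_sep_eq wA1' wB1' wdl AB1 (IH2 [::] isT).
apply: block_embedding_sep_gt => //; first by rewrite ltn_neqAle eq_sym bn nb.
- by rewrite within_cat wB2 wC.
- exact: all2_size AB2.
- by apply: IH2; rewrite !within_cat wdl wB1' within_cons ltn_neqAle eq_sym bn nb bhi.
Qed.
End BlockEmbedding.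

Lemma below_factor_within k lo hi A B C D : hi - lo <= k ->
  within lo hi (A ++ D ++ B ++ C) -> all2 leq A B -> below_factor A B C D.
Proof.
elim: k lo A B C D => [|k IH] lo A B C D hk hw AB;
  have [E|NE] := eqVneq (A ++ D ++ B ++ C) [::];
  try by clear hw; case: A E AB => [|? ?] //; case: D => [|? ?] //;
         case: B => [|? ?] //; case: C => [|? ?] // _ _; split => // -[].
  by move: NE; rewrite (within_empty _ hw) //; lia.
set n := wmin (A ++ D ++ B ++ C).
have nlo : lo <= n := wmin_ge NE hw.
have hn : all (fun x => n <= x) (A ++ D ++ B ++ C) := all_wmin _.
clearbody n.
have above A' B' C' D' : within n.+1 hi A' -> within n.+1 hi B' -> within n.+1 hi C' ->
    within n.+1 hi D' -> all2 leq A' B' -> below_factor A' B' C' D'.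
  move=> wA wB wC wD; apply: (IH n.+1); first lia.
  by rewrite !within_cat wA wB wC wD.
have wn : within n hi (A ++ D ++ B ++ C).
  by apply/allP => x xw; rewrite (allP hn x xw); have /andP [] := allP hw x xw.
have [Ds [dl [eD eX]]] := blocks_catr n D (B ++ C).
have wdl : within n.+1 hi dl.
  have wD : within n hi D by apply: within_sub wn => x xD; rewrite !mem_cat xD orbT.
  by apply: within_blocks wD (within_ge wD) _; rewrite eD mem_rcons mem_head.
have wABC : within n hi (A ++ B ++ C).
  by apply: within_sub wn => x; rewrite !mem_cat => /or3P [] ->; rewrite ?orbT.
have [e1 e2] := block_embedding_within above wABC wdl AB.
have hX : all (fun x => n <= x) ((D ++ B ++ C) ++ A) by rewrite all_cat andbC -all_cat.
have le : precsim A (D ++ B ++ C).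
  rewrite (precsim_blocks hn) eX.
  exact/(embeds_lexs precsim_total precsim_trans)/embeds_catl.
split => // hc; rewrite /prec le (precsim_blocks hX) eX.
apply: (sembeds_lexs precsim_total precsim_trans); apply/sembeds_catl/e2.
by case: hc => [|/(all2_last_neq n AB)]; [left | right].
Qed.

Theorem lemma4 (A B C D : word) :
  size A = size B ->
  (forall i, i < size A -> nth 0 A i <= nth 0 B i) ->
  precsim A (D ++ B ++ C) /\
  ((C != [::] \/ last 0 A != last 0 B) -> prec A (D ++ B ++ C)).
Proof.
move=> sAB leAB.
exact: below_factor_within (leqnn _) (within_wmax _) (all2_nth sAB leAB).
Qed.
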